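(* Let $\kappa$ be inaccessible, $\kappa\le\lambda$, let $C$ be a club subset of $P_\kappa\lambda$ (in Jech's sense), and let $f:P_\kappa\lambda\to P_\kappa\lambda$ satisfy $z\subsetneq f(z)\in C$ for every $z\in P_\kappa\lambda$. Then $C_f=\{x\in P_\kappa\lambda: x\cap\kappa\neq\emptyset,\ f[P_{\kappa_x}x]\subseteq P_{\kappa_x}x\}\subseteq C$. In particular every club subset of $P_\kappa\lambda$ belongs to $\mathrm{NSS}^*_{\kappa,\lambda}$.
   Context: $P_\kappa\lambda=\{x\subseteq\lambda:|x|<\kappa\}$, $\kappa_x=|x\cap\kappa|$, $P_\mu x=\{y\subseteq x:|y|<\mu\}$. A Jech club is a subset of $P_\kappa\lambda$ which is unbounded under $\subseteq$ and closed under unions of $\subseteq$-directed subsets of size $<\kappa$. $\mathrm{NSS}^*_{\kappa,\lambda}$ is the filter of sets containing some $C_g$, $g:P_\kappa\lambda\to P_\kappa\lambda$, where $C_g$ is defined as $C_f$ in the claim. *)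

From Stdlib Require Import Relations Wellfounded.

Set Implicit Arguments.

(* |P| <= |Q| : an injective total relation from P into Q (an injection, under AC). *)
Definition card_le {A B : Type} (P : A -> Prop) (Q : B -> Prop) : Prop :=
  exists R : A -> B -> Prop,
    (forall a, P a -> exists b, Q b /\ R a b) /\
    (forall a a' b, P a -> P a' -> R a b -> R a' b -> a = a').

Definition card_lt {A B : Type} (P : A -> Prop) (Q : B -> Prop) : Prop :=
  card_le P Q /\ ~ card_le Q P.

Definition subset {L : Type} (x y : L -> Prop) : Prop := forall a, x a -> y a.

(* The ordinal lambda is modelled by a type L with a strict well-order lt. *)
Definition strict_well_order {L : Type} (lt : L -> L -> Prop) : Prop :=
  well_founded lt /\
  (forall a b c, lt a b -> lt b c -> lt a c) /\
  (forall a, ~ lt a a) /\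
  (forall a b, lt a b \/ a = b \/ lt b a).

Definition is_cardinal_order {L : Type} (lt : L -> L -> Prop) : Prop :=
  forall b, ~ card_le (fun _ : L => True) (fun a => lt a b).

(* kappa, an ordinal <= lambda, modelled as a downward-closed subset K of L,
   which is an inaccessible cardinal. *)
Definition inaccessible {L : Type} (lt : L -> L -> Prop) (K : L -> Prop) : Prop :=
  (forall a b, lt a b -> K b -> K a) /\
  (forall b, K b -> ~ card_le K (fun a => lt a b)) /\
  card_lt (fun _ : nat => True) K /\
  (* regular: every cofinal subset has size kappa *)
  (forall A : L -> Prop, subset A K ->
     (forall a, K a -> exists b, A b /\ (lt a b \/ a = b)) -> card_le K A) /\
  (forall A : L -> Prop, subset A K -> card_lt A K ->
     card_lt (fun S : L -> Prop => subset S A) K).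

Definition Pkl {L : Type} (K : L -> Prop) (x : L -> Prop) : Prop := card_lt x K.

Definition capK {L : Type} (K : L -> Prop) (x : L -> Prop) : L -> Prop :=
  fun a => x a /\ K a.

(* P_{kappa_x} x, where kappa_x = |x ∩ kappa| *)
Definition Pkx {L : Type} (K : L -> Prop) (x : L -> Prop) (y : L -> Prop) : Prop :=
  subset y x /\ card_lt y (capK K x).

Definition directed {L : Type} (D : (L -> Prop) -> Prop) : Prop :=
  (exists d, D d) /\
  (forall d1 d2, D d1 -> D d2 -> exists d3, D d3 /\ subset d1 d3 /\ subset d2 d3).

Definition bigunion {L : Type} (D : (L -> Prop) -> Prop) : L -> Prop :=
  fun a => exists d, D d /\ d a.

Definition jech_club {L : Type} (K : L -> Prop) (C : (L -> Prop) -> Prop) : Prop :=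
  (forall x, C x -> Pkl K x) /\
  (forall x, Pkl K x -> exists y, C y /\ subset x y) /\
  (forall D : (L -> Prop) -> Prop,
     (forall d, D d -> C d) -> directed D -> card_lt D K -> C (bigunion D)).

Definition Cf {L : Type} (K : L -> Prop) (f : (L -> Prop) -> (L -> Prop))
  (x : L -> Prop) : Prop :=
  Pkl K x /\ (exists a, x a /\ K a) /\
  (forall y, Pkx K x y -> Pkx K x (f y)).

Definition NSSstar {L : Type} (K : L -> Prop) (X : (L -> Prop) -> Prop) : Prop :=
  (forall x, X x -> Pkl K x) /\
  exists g : (L -> Prop) -> (L -> Prop),
    (forall z, Pkl K z -> Pkl K (g z)) /\
    (forall x, Cf K g x -> X x).

From Stdlib Require Import Relations Wellfounded.
From Stdlib Require Import Classical ClassicalEpsilon.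
From Stdlib Require Import FunctionalExtensionality PropExtensionality Arith Lia.

(* Let x be in C_f and let D be the family of the sets f(y) with y in P_{κ_x} x.
   Every member of D is in C, and the union of D is x because f({a}) contains a.
   D is directed because P_{κ_x} x is closed under pairwise unions: κ_x is infinite
   (iterating f from the empty set gives members of P_{κ_x} x of every finite size),
   and an infinite well-orderable set absorbs a disjoint copy of itself (cut it into
   ω-blocks and interleave).  Finally D has fewer than κ members, since it injects
   into the power set of a copy of x inside κ and κ is a strong limit.  Closure of C
   under small directed unions then puts x in C. *)

Definition nat_lt (m : nat) : nat -> Prop := fun n => n < m.

Definition finite_set {A : Type} (P : A -> Prop) : Prop := exists m, card_le P (nat_lt m).

Definition infinite_set {A : Type} (P : A -> Prop) : Prop := forall m, card_le (nat_lt m) P.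

Definition image {A B : Type} (h : A -> B) (P : A -> Prop) : B -> Prop :=
  fun b => exists a, P a /\ b = h a.

Definition dsum {A : Type} (P Q : A -> Prop) (p : bool * A) : Prop :=
  if fst p then Q (snd p) else P (snd p).

Lemma card_le_trans {A B C : Type} {P : A -> Prop} {Q : B -> Prop} {S : C -> Prop} :
  card_le P Q -> card_le Q S -> card_le P S.
Proof.
  intros [R1 [R1_total R1_inj]] [R2 [R2_total R2_inj]].
  exists (fun a c => exists b, Q b /\ R1 a b /\ R2 b c). split.
  - intros a Pa. destruct (R1_total a Pa) as [b [Qb Rab]].
    destruct (R2_total b Qb) as [c [Sc Rbc]]. exists c. split; [exact Sc | exists b; auto].
  - intros a a' c Pa Pa' [b [Qb [Rab Rbc]]] [b' [Qb' [Ra'b' Rb'c]]].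
    assert (b = b') as <- by exact (R2_inj b b' c Qb Qb' Rbc Rb'c).
    exact (R1_inj a a' b Pa Pa' Rab Ra'b').
Qed.

Lemma card_le_of_injective {A B : Type} (P : A -> Prop) (Q : B -> Prop) (g : A -> B) :
  (forall a, P a -> Q (g a)) ->
  (forall a a', P a -> P a' -> g a = g a' -> a = a') -> card_le P Q.
Proof.
  intros g_into g_inj. exists (fun a b => b = g a). split.
  - intros a Pa. exists (g a). auto.
  - intros a a' b Pa Pa' -> E. exact (g_inj a a' Pa Pa' E).
Qed.

Lemma card_le_subset {A : Type} (P Q : A -> Prop) : subset P Q -> card_le P Q.
Proof. intro PQ. exact (card_le_of_injective P Q (fun a => a) PQ (fun _ _ _ _ E => E)). Qed.

Lemma card_le_lt_trans {A B C : Type} {P : A -> Prop} {Q : B -> Prop} {S : C -> Prop} :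
  card_le P Q -> card_lt Q S -> card_lt P S.
Proof.
  intros PQ [QS not_SQ]. split; [exact (card_le_trans PQ QS)|].
  intro SP. exact (not_SQ (card_le_trans SP PQ)).
Qed.

Lemma card_le_image {A B : Type} (h : A -> B) (P : A -> Prop) : card_le (image h P) P.
Proof.
  exists (fun b a => P a /\ b = h a). split.
  - intros b [a Ha]. exists a. split; [apply Ha | exact Ha].
  - intros b b' a _ _ [_ ->] [_ ->]. reflexivity.
Qed.

Lemma card_le_equinumerous_subset {A B : Type} (P : A -> Prop) (Q : B -> Prop) :
  inhabited B -> card_le P Q ->
  exists Q', subset Q' Q /\ card_le P Q' /\ card_le Q' P.
Proof.
  intros inhB [R [R_total R_inj]].
  set (g a := epsilon inhB (fun b => Q b /\ R a b)).
  assert (Hg : forall a, P a -> Q (g a) /\ R a (g a)).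
  { intros a Pa. apply epsilon_spec. exact (R_total a Pa). }
  exists (image g P). split; [|split].
  - intros b [a [Pa ->]]. exact (proj1 (Hg a Pa)).
  - apply (card_le_of_injective P (image g P) g).
    + intros a Pa. exists a. auto.
    + intros a a' Pa Pa' E. apply (R_inj a a' (g a) Pa Pa' (proj2 (Hg a Pa))).
      rewrite E. exact (proj2 (Hg a' Pa')).
  - apply card_le_image.
Qed.

Lemma card_le_powerset {A B : Type} (P : A -> Prop) (Q : B -> Prop) :
  card_le P Q -> card_le (fun S => subset S P) (fun T => subset T Q).
Proof.
  intros [R [R_total R_inj]].
  set (img (S : A -> Prop) (b : B) := Q b /\ exists a, S a /\ R a b).
  assert (img_reflect : forall S S', subset S P -> subset S' P ->
                          subset (img S) (img S') -> subset S S').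
  { intros S S' SP S'P img_SS' a Sa.
    destruct (R_total a (SP a Sa)) as [b [Qb Rab]].
    destruct (img_SS' b (conj Qb (ex_intro _ a (conj Sa Rab)))) as [_ [a' [S'a' Ra'b]]].
    rewrite (R_inj a a' b (SP a Sa) (S'P a' S'a') Rab Ra'b). exact S'a'. }
  exists (fun S T => T = img S). split.
  - intros S _. exists (img S). split; [intros b [Qb _]; exact Qb | reflexivity].
  - intros S S' T SP S'P -> E.
    apply functional_extensionality; intro a; apply propositional_extensionality.
    split; [apply (img_reflect S S') | apply (img_reflect S' S)]; auto;
      rewrite E; intros b Hb; exact Hb.
Qed.

Lemma card_le_union_dsum {A : Type} (P Q : A -> Prop) :
  card_le (fun a => P a \/ Q a) (dsum P Q).
Proof.
  exists (fun a p => snd p = a /\ dsum P Q p). split.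
  - intros a [Pa|Qa]; [exists (false, a) | exists (true, a)]; simpl; auto.
  - intros a a' p _ _ [<- _] [<- _]. reflexivity.
Qed.

Lemma card_le_dsum {A B : Type} {P Q : A -> Prop} {P' Q' : B -> Prop} :
  card_le P P' -> card_le Q Q' -> card_le (dsum P Q) (dsum P' Q').
Proof.
  intros [R1 [R1_total R1_inj]] [R2 [R2_total R2_inj]].
  exists (fun (p : bool * A) (p' : bool * B) =>
    fst p' = fst p /\ (if fst p then R2 else R1) (snd p) (snd p')).
  split.
  - intros [[|] a] Ha; simpl in Ha.
    + destruct (R2_total a Ha) as [b [Hb Rab]]. exists (true, b). simpl. auto.
    + destruct (R1_total a Ha) as [b [Hb Rab]]. exists (false, b). simpl. auto.
  - intros [i a] [i' a'] [j b] Ha Ha' [Ej Rab] [Ej' Ra'b]; simpl in *.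
    subst i' j. destruct i; f_equal; eauto.
Qed.

Lemma nat_lt_pigeonhole (m : nat) : ~ card_le (nat_lt (S m)) (nat_lt m).
Proof.
  unfold nat_lt. induction m as [|m IH]; intros [R [R_total R_inj]].
  - destruct (R_total 0) as [b [Hb _]]; lia.
  - destruct (R_total (S m)) as [top [Htop Rtop]]; [lia|].
    assert (top_only : forall a, a < S (S m) -> R a top -> a = S m)
      by (intros a Ha Rat; exact (R_inj a (S m) top Ha ltac:(lia) Rat Rtop)).
    apply IH. exists (fun a b => b < m /\ (R a b \/ (R a m /\ b = top))). split.
    + intros a Ha. destruct (R_total a) as [b [Hb Rab]]; [lia|].
      assert (b <> top) by (intros ->; specialize (top_only a ltac:(lia) Rab); lia).
      destruct (Nat.eq_dec b m) as [->|Hbm].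
      * exists top. split; [lia | split; [lia | right; auto]].
      * exists b. split; [lia | split; [lia | left; auto]].
    + intros a a' b Ha Ha' [_ [Rab|[Ram Eb]]] [_ [Ra'b|[Ra'm Eb']]].
      * exact (R_inj a a' b ltac:(lia) ltac:(lia) Rab Ra'b).
      * subst b. specialize (top_only a ltac:(lia) Rab). lia.
      * subst b. specialize (top_only a' ltac:(lia) Ra'b). lia.
      * exact (R_inj a a' m ltac:(lia) ltac:(lia) Ram Ra'm).
Qed.

Lemma infinite_not_finite {A : Type} (P : A -> Prop) : infinite_set P -> ~ finite_set P.
Proof. intros P_inf [m Pm]. exact (nat_lt_pigeonhole m (card_le_trans (P_inf (S m)) Pm)). Qed.

Lemma dsum_nat_lt (m : nat) : card_le (dsum (nat_lt m) (nat_lt m)) (nat_lt (m + m)).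
Proof.
  apply (card_le_of_injective _ _ (fun p : bool * nat => if fst p then snd p + m else snd p)).
  - intros [[|] n]; unfold dsum, nat_lt; simpl; lia.
  - intros [[|] n] [[|] n']; unfold dsum, nat_lt; simpl; intros;
      first [f_equal; lia | exfalso; lia].
Qed.

Lemma finite_dsum {A : Type} (P : A -> Prop) : finite_set P -> finite_set (dsum P P).
Proof.
  intros [m Pm]. exists (m + m). exact (card_le_trans (card_le_dsum Pm Pm) (dsum_nat_lt m)).
Qed.

Lemma card_le_nat_lt_S {A : Type} (k : nat) (y z : A -> Prop) :
  card_le (nat_lt k) y -> subset y z -> ~ subset z y -> card_le (nat_lt (S k)) z.
Proof.
  intros [R [R_total R_inj]] yz not_zy.
  destruct (not_all_ex_not _ _ not_zy) as [e He].
  destruct (imply_to_and _ _ He) as [ze not_ye].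
  exists (fun n a => (n < k /\ R n a /\ y a) \/ (n = k /\ a = e)). split.
  - unfold nat_lt. intros n Hn. destruct (Nat.eq_dec n k) as [->|Hnk].
    + exists e. auto.
    + destruct (R_total n) as [a [ya Rna]]; [unfold nat_lt; lia|].
      exists a. split; [exact (yz a ya) | left; split; [lia | auto]].
  - intros n n' a _ _ [[Hn [Rna ya]]|[-> ->]] [[Hn' [Rn'a ya']]|[-> Ea]].
    + exact (R_inj n n' a Hn Hn' Rna Rn'a).
    + subst a. contradiction.
    + contradiction.
    + reflexivity.
Qed.

Lemma card_lt_singleton {A B : Type} (a : A) (W : B -> Prop) :
  card_le (nat_lt 2) W -> card_lt (fun z => z = a) W.
Proof.
  intros [R2 [R2_total R2_inj]].
  destruct (R2_total 0) as [w0 [Ww0 R0]]; [unfold nat_lt; lia|].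
  destruct (R2_total 1) as [w1 [Ww1 R1]]; [unfold nat_lt; lia|].
  split.
  - exists (fun _ w => w = w0). split.
    + intros z _. exists w0. auto.
    + intros z z' w -> -> _ _. reflexivity.
  - intros [R [R_total R_inj]].
    destruct (R_total w0 Ww0) as [z0 [-> Rw0]]. destruct (R_total w1 Ww1) as [z1 [-> Rw1]].
    assert (w0 = w1) as <- by exact (R_inj w0 w1 a Ww0 Ww1 Rw0 Rw1).
    assert (0 = 1) by (apply (R2_inj 0 1 w0); unfold nat_lt; auto). discriminate.
Qed.

Section WellOrder.

Context {L : Type} (lt : L -> L -> Prop).
Hypothesis lt_wo : strict_well_order lt.

Lemma exists_least (P : L -> Prop) :
  (exists a, P a) -> exists b, P b /\ forall b', P b' -> ~ lt b' b.
Proof.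
  intros [a Pa]. apply NNPP. intro no_least.
  assert (none : forall c, ~ P c).
  { intro c. induction (proj1 lt_wo c) as [c _ IH]. intro Pc.
    apply no_least. exists c. split; [exact Pc|].
    intros b' Pb' b'c. exact (IH b' b'c Pb'). }
  exact (none a Pa).
Qed.

Definition least (P : L -> Prop) : option L :=
  match excluded_middle_informative (exists b, P b /\ forall b', P b' -> ~ lt b' b) with
  | left ex => Some (proj1_sig (constructive_indefinite_description _ ex))
  | right _ => None
  end.

Lemma least_Some (P : L -> Prop) (b : L) :
  least P = Some b -> P b /\ forall b', P b' -> ~ lt b' b.
Proof.
  unfold least. destruct excluded_middle_informative as [ex|]; [|discriminate].
  intro E. injection E as <-. exact (proj2_sig (constructive_indefinite_description _ ex)).
Qed.

Lemma least_None (P : L -> Prop) : least P = None -> forall b, ~ P b.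
Proof.
  unfold least. destruct excluded_middle_informative as [|no_least]; [discriminate|].
  intros _ b Pb. exact (no_least (exists_least P (ex_intro _ b Pb))).
Qed.

Section Comparability.

Variables A B : L -> Prop.

(* [matching] sends the α-th element of A to the α-th element of B, for as long as B lasts. *)
Definition matching_step (a : L) (prev : forall a', lt a' a -> option L) : option L :=
  least (fun b => B b /\
    forall a' (H : lt a' a), A a' -> forall b', prev a' H = Some b' -> lt b' b).

Definition matching : L -> option L := Fix (proj1 lt_wo) (fun _ => option L) matching_step.

Definition matched_below (a b : L) : Prop :=
  forall a', lt a' a -> A a' -> forall b', matching a' = Some b' -> lt b' b.

Lemma matching_eq (a : L) : matching a = least (fun b => B b /\ matched_below a b).
Proof.
  unfold matching. rewrite Fix_eq; [reflexivity|].
  intros a0 prev prev' same. replace prev' with prev; [reflexivity|].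
  apply functional_extensionality_dep; intro a'.
  apply functional_extensionality_dep; intro H. apply same.
Qed.

Lemma matching_Some (a b : L) : matching a = Some b ->
  B b /\ matched_below a b /\ forall b', B b' -> matched_below a b' -> ~ lt b' b.
Proof.
  rewrite matching_eq. intro E. destruct (least_Some _ b E) as [[Bb below] b_min].
  split; [exact Bb | split; [exact below|]].
  intros b' Bb' below'. exact (b_min b' (conj Bb' below')).
Qed.

Lemma matching_None (a : L) : matching a = None -> forall b, B b -> ~ matched_below a b.
Proof. rewrite matching_eq. intros E b Bb below. exact (least_None _ E b (conj Bb below)). Qed.

Lemma matching_injective (a a' b : L) :
  A a -> A a' -> matching a = Some b -> matching a' = Some b -> a = a'.
Proof.
  destruct lt_wo as [_ [_ [irr tri]]]. intros Aa Aa' Ea Ea'.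
  destruct (tri a a') as [H|[E|H]]; [exfalso | exact E | exfalso].
  - destruct (matching_Some a' b Ea') as [_ [below _]]. exact (irr b (below a H Aa b Ea)).
  - destruct (matching_Some a b Ea) as [_ [below _]]. exact (irr b (below a' H Aa' b Ea')).
Qed.

Lemma matching_onto (a0 : L) : matching a0 = None ->
  forall b, B b -> exists a, A a /\ lt a a0 /\ matching a = Some b.
Proof.
  destruct lt_wo as [_ [trans [_ tri]]]. intros E0 b Bb.
  set (P a := A a /\ lt a a0 /\ exists b', matching a = Some b' /\ ~ lt b' b).
  assert (exP : exists a, P a).
  { apply NNPP; intro noP. apply (matching_None a0 E0 b Bb).
    intros a' a'a0 Aa' b' Eb'. apply NNPP; intro not_lt. apply noP.
    exists a'. split; [exact Aa' | split; [exact a'a0 | exists b'; auto]]. }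
  destruct (exists_least P exP) as [a1 [[Aa1 [a1a0 [b1 [Eb1 b1b]]]] a1_min]].
  exists a1. split; [exact Aa1 | split; [exact a1a0|]].
  destruct (tri b1 b) as [H|[<-|H]]; [contradiction | exact Eb1 | exfalso].
  destruct (matching_Some a1 b1 Eb1) as [_ [_ b1_min]].
  apply (b1_min b Bb); [|exact H].
  intros a' a'a1 Aa' b' Eb'. apply NNPP; intro not_lt.
  apply (a1_min a'); [|exact a'a1].
  split; [exact Aa' | split; [exact (trans _ _ _ a'a1 a1a0) | exists b'; auto]].
Qed.

Lemma card_le_total : card_le A B \/ card_le B A.
Proof.
  destruct (classic (exists a0, matching a0 = None)) as [[a0 E0]|all_matched].
  - right. exists (fun b a => A a /\ lt a a0 /\ matching a = Some b). split.
    + intros b Bb. destruct (matching_onto a0 E0 b Bb) as [a Ha].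
      exists a. split; [apply Ha | exact Ha].
    + intros b b' a _ _ [_ [_ Eb]] [_ [_ Eb']]. rewrite Eb in Eb'. injection Eb'. auto.
  - left. exists (fun a b => matching a = Some b). split.
    + intros a Aa. destruct (matching a) as [b|] eqn:Ea.
      * exists b. split; [exact (proj1 (matching_Some a b Ea)) | reflexivity].
      * exfalso. apply all_matched. exists a. exact Ea.
    + intros a a' b Aa Aa'. exact (matching_injective a a' b Aa Aa').
Qed.

End Comparability.

Section Blocks.

Variable A : L -> Prop.

Definition succ_in (p c : L) : Prop :=
  A p /\ A c /\ lt p c /\ forall z, A z -> lt p z -> c = z \/ lt c z.

Definition limit_in (b : L) : Prop := A b /\ forall p, ~ succ_in p b.

(* [nth_succ b k c]: c = b + k in the order of A, where b has no predecessor in A. *)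
Inductive nth_succ (b : L) : nat -> L -> Prop :=
  | nth_succ_0 : limit_in b -> nth_succ b 0 b
  | nth_succ_S : forall k c c', nth_succ b k c -> succ_in c c' -> nth_succ b (S k) c'.

Definition long_block (b : L) : Prop := forall k, exists c, nth_succ b k c.

Lemma succ_in_functional (p c c' : L) : succ_in p c -> succ_in p c' -> c = c'.
Proof.
  destruct lt_wo as [_ [trans [irr _]]].
  intros (_ & Ac & pc & c_next) (_ & Ac' & pc' & c'_next).
  destruct (c_next c' Ac' pc') as [E|cc']; [exact E|].
  destruct (c'_next c Ac pc) as [E|c'c]; [auto|].
  exfalso. exact (irr c (trans _ _ _ cc' c'c)).
Qed.

Lemma succ_in_injective (p p' c : L) : succ_in p c -> succ_in p' c -> p = p'.
Proof.
  destruct lt_wo as [_ [trans [irr tri]]].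
  intros (Ap & _ & pc & c_next) (Ap' & _ & p'c & c_next').
  destruct (tri p p') as [H|[E|H]]; [exfalso | exact E | exfalso].
  - destruct (c_next p' Ap' H) as [<-|cp'];
      [exact (irr c p'c) | exact (irr c (trans _ _ _ cp' p'c))].
  - destruct (c_next' p Ap H) as [<-|cp];
      [exact (irr c pc) | exact (irr c (trans _ _ _ cp pc))].
Qed.

Lemma nth_succ_in (b : L) (k : nat) (c : L) : nth_succ b k c -> A c /\ limit_in b.
Proof.
  induction 1 as [Hb | k c c' _ IH (_ & Ac' & _)];
    [exact (conj (proj1 Hb) Hb) | exact (conj Ac' (proj2 IH))].
Qed.

Lemma nth_succ_unique (b b' : L) (k k' : nat) (c : L) :
  nth_succ b k c -> nth_succ b' k' c -> b = b' /\ k = k'.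
Proof.
  intro H. revert b' k'. induction H as [Hb | k c c' Hc IH Hs]; intros b' k' H'.
  - inversion H' as [| k0 c0 ? Hc0 Hs0]; [auto | exfalso; exact (proj2 Hb c0 Hs0)].
  - inversion H' as [Hb' | k0 c0 ? Hc0 Hs0]; subst.
    + exfalso. exact (proj2 Hb' c Hs).
    + rewrite (succ_in_injective c0 c c' Hs0 Hs) in Hc0.
      destruct (IH b' k0 Hc0) as [-> ->]. auto.
Qed.

Lemma nth_succ_functional (b : L) (k : nat) (c c' : L) :
  nth_succ b k c -> nth_succ b k c' -> c = c'.
Proof.
  intro H. revert c'. induction H as [Hb | k c c1 Hc IH Hs]; intros c' H'.
  - inversion H'; reflexivity.
  - inversion H' as [| k0 c0 ? Hc0 Hs0]; subst.
    rewrite <- (IH c0 Hc0) in Hs0. exact (succ_in_functional c c1 c' Hs Hs0).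
Qed.

Lemma nth_succ_le (b : L) (k : nat) (c : L) (j : nat) :
  nth_succ b k c -> j <= k -> exists c', nth_succ b j c'.
Proof.
  intro H. revert j. induction H as [Hb | k c c' Hc IH Hs]; intros j jk.
  - exists b. replace j with 0 by lia. constructor. exact Hb.
  - destruct (Nat.eq_dec j (S k)) as [->|]; [exists c'; econstructor; eauto | apply IH; lia].
Qed.

Lemma nth_succ_exists (c : L) : A c -> exists b k, nth_succ b k c.
Proof.
  induction (proj1 lt_wo c) as [c _ IH]. intro Ac.
  destruct (classic (exists p, succ_in p c)) as [[p Hp]|no_pred].
  - pose proof Hp as (Ap & _ & pc & _). destruct (IH p pc Ap) as [b [k Hk]].
    exists b, (S k). econstructor; eauto.
  - exists c, 0. constructor. split; [exact Ac|]. intros p Hp. exact (no_pred (ex_intro _ p Hp)).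
Qed.

Lemma short_block_last (b : L) : limit_in b -> ~ long_block b ->
  exists m c, nth_succ b m c /\ (forall k c', nth_succ b k c' -> k <= m) /\
              (forall z, A z -> ~ lt c z).
Proof.
  intros Hb not_long. destruct (not_all_ex_not _ _ not_long) as [k0 Hk0].
  assert (exists m c, nth_succ b m c /\ ~ exists c', nth_succ b (S m) c') as [m [c [Hc last]]].
  { induction k0 as [|k IH].
    - exfalso. apply Hk0. exists b. constructor. exact Hb.
    - destruct (classic (exists c, nth_succ b k c)) as [[c Hc]|none];
        [exists k, c; auto | exact (IH none)]. }
  exists m, c. split; [exact Hc | split].
  - intros k c' Hk. destruct (Nat.le_gt_cases k m) as [|mk]; [assumption | exfalso].
    apply last. apply (nth_succ_le b k c' (S m) Hk). lia.
  - intros z Az cz. destruct lt_wo as [_ [_ [_ tri]]].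
    destruct (exists_least (fun z => A z /\ lt c z) (ex_intro _ z (conj Az cz)))
      as [s [[As cs] s_min]].
    apply last. exists s. apply (nth_succ_S b m c s Hc).
    split; [exact (proj1 (nth_succ_in b m c Hc)) | split; [exact As | split; [exact cs|]]].
    intros z' Az' cz'. destruct (tri s z') as [H|[H|H]]; auto.
    exfalso. exact (s_min z' (conj Az' cz') H).
Qed.

Lemma short_block_unique (b b' : L) :
  limit_in b -> ~ long_block b -> limit_in b' -> ~ long_block b' -> b = b'.
Proof.
  intros Hb short_b Hb' short_b'. destruct lt_wo as [_ [_ [_ tri]]].
  destruct (short_block_last b Hb short_b) as [m [c [Hc [_ c_max]]]].
  destruct (short_block_last b' Hb' short_b') as [m' [c' [Hc' [_ c'_max]]]].
  assert (c = c') as <-.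
  { destruct (tri c c') as [H|[E|H]]; [exfalso | exact E | exfalso].
    - exact (c_max c' (proj1 (nth_succ_in _ _ _ Hc')) H).
    - exact (c'_max c (proj1 (nth_succ_in _ _ _ Hc)) H). }
  exact (proj1 (nth_succ_unique _ _ _ _ _ Hc Hc')).
Qed.

Lemma short_blocks_bounded :
  exists M, forall b k c, nth_succ b k c -> ~ long_block b -> k < M.
Proof.
  destruct (classic (exists b, limit_in b /\ ~ long_block b)) as [[b0 [Hb0 short_b0]]|no_short].
  - destruct (short_block_last b0 Hb0 short_b0) as [m [_ [_ [bound _]]]].
    exists (S m). intros b k c Hk short_b.
    assert (b = b0) as ->
      by exact (short_block_unique b b0 (proj2 (nth_succ_in _ _ _ Hk)) short_b Hb0 short_b0).
    specialize (bound k c Hk). lia.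
  - exists 0. intros b k c Hk short_b. exfalso.
    apply no_short. exists b. split; [exact (proj2 (nth_succ_in _ _ _ Hk)) | exact short_b].
Qed.

(* The element b + k of A, tagged i, goes to b + (2k + i + 2M) if the block of b is long, and
   to bs + (2k + i) if it is the short block (there is at most one, of length < M). *)
Lemma long_block_dsum_le (bs : L) : long_block bs -> card_le (dsum A A) A.
Proof.
  intro long_bs. destruct short_blocks_bounded as [M bounded].
  set (shift (i : bool) k := 2 * k + (if i then 1 else 0)).
  assert (shift_inj : forall i i' k k', shift i k = shift i' k' -> i = i' /\ k = k').
  { intros [|] [|] k k'; unfold shift; intro; first [split; [reflexivity | lia] | exfalso; lia]. }
  assert (shift_small : forall i k, k < M -> shift i k < 2 * M)
    by (intros [|] k; unfold shift; lia).
  exists (fun (p : bool * L) (c : L) => exists b k, nth_succ b k (snd p) /\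
     ((long_block b /\ nth_succ b (shift (fst p) k + 2 * M) c) \/
      (~ long_block b /\ nth_succ bs (shift (fst p) k) c))).
  split.
  - intros [i a] Ha. assert (Aa : A a) by (destruct i; exact Ha).
    destruct (nth_succ_exists a Aa) as [b [k Hk]].
    destruct (classic (long_block b)) as [long_b|short_b].
    + destruct (long_b (shift i k + 2 * M)) as [c Hc].
      exists c. split; [exact (proj1 (nth_succ_in _ _ _ Hc)) | exists b, k; auto].
    + destruct (long_bs (shift i k)) as [c Hc].
      exists c. split; [exact (proj1 (nth_succ_in _ _ _ Hc)) | exists b, k; auto].
  - intros [i a] [i' a'] c _ _ [b [k [Hk H]]] [b' [k' [Hk' H']]]; simpl in *.
    destruct H as [[long_b Hc]|[short_b Hc]], H' as [[long_b' Hc']|[short_b' Hc']];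
      destruct (nth_succ_unique _ _ _ _ _ Hc Hc') as [Eb E].
    + subst b'. destruct (shift_inj i i' k k' ltac:(lia)) as [<- <-].
      rewrite (nth_succ_functional _ _ _ _ Hk Hk'). reflexivity.
    + specialize (shift_small i' k' (bounded _ _ _ Hk' short_b')). lia.
    + specialize (shift_small i k (bounded _ _ _ Hk short_b)). lia.
    + destruct (shift_inj i i' k k' E) as [<- <-].
      assert (b = b') as <- by exact (short_block_unique b b'
        (proj2 (nth_succ_in _ _ _ Hk)) short_b (proj2 (nth_succ_in _ _ _ Hk')) short_b').
      rewrite (nth_succ_functional _ _ _ _ Hk Hk'). reflexivity.
Qed.

Lemma no_long_block_finite : ~ (exists b, long_block b) -> finite_set A.
Proof.
  intro no_long.
  destruct (classic (exists a, A a)) as [[a0 Aa0]|empty].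
  - destruct (nth_succ_exists a0 Aa0) as [b0 [k0 H0]].
    assert (short_b0 : ~ long_block b0) by (intro; apply no_long; exists b0; assumption).
    assert (Hb0 : limit_in b0) by exact (proj2 (nth_succ_in _ _ _ H0)).
    destruct (short_block_last b0 Hb0 short_b0) as [m [_ [_ [bound _]]]].
    exists (S m), (fun c n => nth_succ b0 n c). split.
    + intros c Ac. destruct (nth_succ_exists c Ac) as [b [k Hk]].
      assert (short_b : ~ long_block b) by (intro; apply no_long; exists b; assumption).
      assert (b = b0) as ->
        by exact (short_block_unique b b0 (proj2 (nth_succ_in _ _ _ Hk)) short_b Hb0 short_b0).
      exists k. split; [unfold nat_lt; specialize (bound k c Hk); lia | exact Hk].
    + intros c c' n _ _ Hn Hn'. exact (nth_succ_functional _ _ _ _ Hn Hn').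
  - exists 0, (fun _ _ => False). split; [intros a Aa; exfalso; eauto | intros; contradiction].
Qed.

Lemma finite_or_dsum_le : finite_set A \/ card_le (dsum A A) A.
Proof.
  destruct (classic (exists b, long_block b)) as [[bs long_bs]|no_long].
  - right. exact (long_block_dsum_le bs long_bs).
  - left. exact (no_long_block_finite no_long).
Qed.

End Blocks.

Lemma infinite_dsum_le (W : L -> Prop) : infinite_set W -> card_le (dsum W W) W.
Proof.
  intro W_inf. destruct (finite_or_dsum_le W) as [W_fin|]; [|assumption].
  exfalso. exact (infinite_not_finite W W_inf W_fin).
Qed.

Lemma card_lt_union (W u v : L -> Prop) : infinite_set W ->
  card_lt u W -> card_lt v W -> card_lt (fun a => u a \/ v a) W.
Proof.
  intros W_inf [uW not_Wu] [vW not_Wv]. split.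
  - exact (card_le_trans (card_le_union_dsum u v)
             (card_le_trans (card_le_dsum uW vW) (infinite_dsum_le W W_inf))).
  - assert (absorb : forall s t : L -> Prop,
               card_le s t -> ~ card_le W t -> ~ card_le W (fun a => s a \/ t a)).
    { intros s t st not_Wt Wst.
      assert (W_le : card_le W (dsum t t)) by exact (card_le_trans Wst
        (card_le_trans (card_le_union_dsum s t)
           (card_le_dsum st (card_le_subset t t (fun _ h => h))))).
      destruct (finite_or_dsum_le t) as [t_fin|tt].
      - apply (infinite_not_finite W W_inf). destruct (finite_dsum t t_fin) as [m Hm].
        exists m. exact (card_le_trans W_le Hm).
      - exact (not_Wt (card_le_trans W_le tt)). }
    intro Wuv. destruct (card_le_total u v) as [uv|vu].
    + exact (absorb u v uv not_Wv Wuv).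
    + apply (absorb v u vu not_Wu). refine (card_le_trans Wuv (card_le_subset _ _ _)).
      intros a [|]; auto.
Qed.

End WellOrder.

Section CfInClub.

Context {L : Type} (lt : L -> L -> Prop) (K : L -> Prop)
  (C : (L -> Prop) -> Prop) (f : (L -> Prop) -> (L -> Prop)).
Hypothesis lt_wo : strict_well_order lt.
Hypothesis K_strong_limit :
  forall A, subset A K -> card_lt A K -> card_lt (fun S => subset S A) K.
Hypothesis C_closed : forall D : (L -> Prop) -> Prop,
  (forall d, D d -> C d) -> directed D -> card_lt D K -> C (bigunion D).
Hypothesis f_grows : forall z, Pkl K z -> subset z (f z) /\ ~ subset (f z) z /\ C (f z).
Variable x : L -> Prop.
Hypothesis x_Cf : Cf K f x.

Lemma Pkx_Pkl (y : L -> Prop) : Pkx K x y -> Pkl K y.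
Proof. intros [yx _]. exact (card_le_lt_trans (card_le_subset y x yx) (proj1 x_Cf)). Qed.

Lemma iter_f_Pkx (k : nat) :
  Pkx K x (Nat.iter k f (fun _ => False)) /\ card_le (nat_lt k) (Nat.iter k f (fun _ => False)).
Proof.
  destruct x_Cf as [_ [[a0 [xa0 Ka0]] f_Pkx]].
  induction k as [|k [y_Pkx y_big]]; simpl.
  - split; [split; [intros a [] | split] |].
    + exists (fun _ _ => False). split; [intros a [] | intros; contradiction].
    + intros [R [R_total _]]. destruct (R_total a0 (conj xa0 Ka0)) as [b [[] _]].
    + exists (fun _ _ => False). split; [unfold nat_lt; intros; lia | intros; contradiction].
  - destruct (f_grows _ (Pkx_Pkl _ y_Pkx)) as [grows [strict _]].
    split; [exact (f_Pkx _ y_Pkx) | exact (card_le_nat_lt_S k _ _ y_big grows strict)].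
Qed.

Lemma capK_infinite : infinite_set (capK K x).
Proof.
  intro k. destruct (iter_f_Pkx k) as [[_ y_small] y_big].
  exact (card_le_trans y_big (proj1 y_small)).
Qed.

Lemma Pkx_singleton (a : L) : x a -> Pkx K x (fun z => z = a).
Proof.
  intro xa. split; [intros z ->; exact xa | exact (card_lt_singleton a _ (capK_infinite 2))].
Qed.

Lemma Pkx_union (y1 y2 : L -> Prop) :
  Pkx K x y1 -> Pkx K x y2 -> Pkx K x (fun a => y1 a \/ y2 a).
Proof.
  intros [y1x y1_small] [y2x y2_small]. split.
  - intros a [|]; auto.
  - exact (card_lt_union lt lt_wo _ _ _ capK_infinite y1_small y2_small).
Qed.

Lemma bigunion_image_Pkx : bigunion (image f (Pkx K x)) = x.
Proof.
  destruct x_Cf as [_ [_ f_Pkx]].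
  apply functional_extensionality; intro a; apply propositional_extensionality; split.
  - intros [d [[y [y_Pkx ->]] fya]]. exact (proj1 (f_Pkx y y_Pkx) a fya).
  - intro xa. exists (f (fun z => z = a)). split.
    + exists (fun z => z = a). split; [exact (Pkx_singleton a xa) | reflexivity].
    + exact (proj1 (f_grows _ (Pkx_Pkl _ (Pkx_singleton a xa))) a eq_refl).
Qed.

Lemma directed_image_Pkx : directed (image f (Pkx K x)).
Proof.
  destruct x_Cf as [_ [_ f_Pkx]]. split.
  - exists (f (fun _ => False)), (fun _ => False).
    split; [exact (proj1 (iter_f_Pkx 0)) | reflexivity].
  - intros d1 d2 [y1 [y1_Pkx ->]] [y2 [y2_Pkx ->]].
    set (y := fun a => f y1 a \/ f y2 a).
    assert (y_Pkx : Pkx K x y) by exact (Pkx_union _ _ (f_Pkx y1 y1_Pkx) (f_Pkx y2 y2_Pkx)).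
    destruct (f_grows y (Pkx_Pkl y y_Pkx)) as [grows _].
    exists (f y). split; [exists y; auto | split; intros a Ha; apply grows; unfold y; auto].
Qed.

Lemma card_lt_image_Pkx : card_lt (image f (Pkx K x)) K.
Proof.
  destruct x_Cf as [x_small [[a0 [xa0 _]] _]].
  destruct (card_le_equinumerous_subset x K (inhabits a0) (proj1 x_small)) as [A [AK [xA Ax]]].
  refine (card_le_lt_trans _ (K_strong_limit A AK (card_le_lt_trans Ax x_small))).
  refine (card_le_trans (card_le_image f _) (card_le_trans _ (card_le_powerset x A xA))).
  apply card_le_subset. intros y [yx _]. exact yx.
Qed.

Lemma Cf_in_club : C x.
Proof.
  rewrite <- bigunion_image_Pkx. apply C_closed.
  - intros d [y [y_Pkx ->]]. exact (proj2 (proj2 (f_grows y (Pkx_Pkl y y_Pkx)))).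
  - exact directed_image_Pkx.
  - exact card_lt_image_Pkx.
Qed.

End CfInClub.

Theorem lemma2p4 (L : Type) (lt : L -> L -> Prop) (K : L -> Prop)
  (C : (L -> Prop) -> Prop) (f : (L -> Prop) -> (L -> Prop)) :
  strict_well_order lt ->
  is_cardinal_order lt ->
  inaccessible lt K ->
  jech_club K C ->
  (forall z, Pkl K z -> subset z (f z) /\ ~ subset (f z) z /\ C (f z)) ->
  (forall x, Cf K f x -> C x) /\ NSSstar K C.
Proof.
  intros lt_wo _ [_ [_ [_ [_ K_strong_limit]]]] [C_Pkl [_ C_closed]] f_grows.
  assert (Cf_C : forall x, Cf K f x -> C x)
    by exact (Cf_in_club lt K C f lt_wo K_strong_limit C_closed f_grows).
  split; [exact Cf_C | split; [exact C_Pkl |]].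
  exists f. split; [|exact Cf_C].
  intros z Hz. exact (C_Pkl _ (proj2 (proj2 (f_grows z Hz)))).
Qed.
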